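(* Let $m\geq 1$ and $n\geq 3$. For every $k\in\{1,\ldots,m\}$, there exists exactly one walk in $D^m_n$ of length $2n-2$ from vertex $(k-1)(n-1)+2$ to vertex $(k-1)(n-1)+n$.
   Context: For integers $m\geq 1$, $n\geq 3$, the oriented Dutch windmill graph $D^m_n$ is the directed graph with vertex set $V=\{1,2,\ldots,m(n-1)+1\}$ whose directed edges $(a,b)$ are exactly: $(1,(k-1)(n-1)+2)$ for $k\in\{1,\ldots,m\}$; $((k-1)(n-1)+i,(k-1)(n-1)+i+1)$ for $k\in\{1,\ldots,m\}$ and $i\in\{2,\ldots,n-1\}$; and $((k-1)(n-1)+n,1)$ for $k\in\{1,\ldots,m\}$. A walk is a sequence of vertices $\langle v_1,\ldots,v_r\rangle$ in which each $(v_t,v_{t+1})$ is an edge; its length is $r-1$. *)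

From mathcomp Require Import all_boot.
Set Implicit Arguments. Unset Strict Implicit. Unset Printing Implicit Defensive.

Definition dw_vertex (m n v : nat) : bool := (1 <= v) && (v <= m * (n - 1) + 1).

Definition dw_edge (m n : nat) (a b : nat) : bool :=
  [|| [exists k : 'I_m, (a == 1) && (b == k * (n - 1) + 2)],
      [exists k : 'I_m, exists i : 'I_n,
          [&& 2 <= i, i <= n - 1, a == k * (n - 1) + i & b == k * (n - 1) + i + 1]]
    | [exists k : 'I_m, (a == k * (n - 1) + n) && (b == 1)]].

Definition is_walk (m n : nat) (w : seq nat) : Prop :=
  w <> [::] /\ all (dw_vertex m n) w /\ sorted (dw_edge m n) w.

Definition walk_length (w : seq nat) : nat := (size w).-1.

(* Every vertex of D^m_n other than the hub 1 has exactly one out-neighbour: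
   inside a blade one moves to the next vertex, from the last vertex of a blade
   back to 1.  A walk of length 2n-2 starting at the entry of blade k is thus
   forced through the n-1 vertices of blade k to the hub, then chooses the
   entry of some blade j and is again forced through its n-1 vertices.  It ends
   at the exit of blade j, which is the exit of blade k only when j = k. *)
From mathcomp Require Import all_boot zify.

Lemma last_iota a n : last a (iota a.+1 n) = a + n.
Proof. by elim: n a => [|n IHn] a /=; rewrite ?addn0 // IHn addnS. Qed.

Section DutchWindmill.

Variables m N : nat.
Hypothesis N_gt0 : 0 < N.

(* With n = N.+1, the vertices (k-1)(n-1)+2, ..., (k-1)(n-1)+n of the paper's
   k-th blade are [blade (k-1) i] for i < N. *)
Local Notation blade j i := (j * N + i.+2).
Local Notation edge := (dw_edge m N.+1).

Lemma blade_inj j j' i i' : i < N -> i' < N ->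
  blade j i = blade j' i' -> j = j' /\ i = i'.
Proof.
move=> ltiN lti'N /eqP; rewrite !addnS !eqSS => /eqP eq_ji.
split; last by have := congr1 (modn^~ N) eq_ji; rewrite !modnMDl !modn_small.
by have := congr1 (divn^~ N) eq_ji; rewrite !divnMDl // !divn_small ?addn0.
Qed.

Lemma edge_bladeE j i b : i < N ->
  edge (blade j i) b = (j < m) && (b == if i.+1 < N then blade j i.+1 else 1).
Proof.
move=> ltiN; rewrite /dw_edge subn1 /=; apply/idP/idP.
- case/or3P.
  + by case/existsP=> k /andP[/eqP]; lia.
  + case/existsP=> k /existsP[i' /and4P[le2i' lei'N /eqP eq_a /eqP ->]].
    have eq_blade : blade j i = blade k (i' - 2) by rewrite eq_a; lia.
    case/blade_inj: eq_blade => // [|-> ->]; first lia.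
    by rewrite ltn_ord ifT; [apply/eqP; lia | lia].
  + case/existsP=> k /andP[/eqP eq_a /eqP ->].
    have eq_blade : blade j i = blade k N.-1 by rewrite eq_a; lia.
    case/blade_inj: eq_blade => // [|-> ->]; first lia.
    by rewrite ltn_ord prednK // ltnn.
- case/andP=> ltjm; case: ifP => [ltiN1|geiN1] /eqP ->; apply/or3P.
  + apply: Or32; apply/existsP; exists (Ordinal ltjm); apply/existsP.
    have lti2N : i.+2 < N.+1 by lia.
    by exists (Ordinal lti2N); apply/and4P; split => //=; apply/eqP; lia.
  + apply: Or33; apply/existsP; exists (Ordinal ltjm).
    by rewrite /= eqxx andbT; apply/eqP; lia.
Qed.

Lemma edge_hubE b : edge 1 b = [exists j : 'I_m, b == blade j 0].
Proof.
rewrite /dw_edge subn1 /=; apply/idP/idP => [|/existsP[j /eqP ->]].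
- case/or3P.
  + by case/existsP=> j eq_b; apply/existsP; exists j.
  + by case/existsP=> k /existsP[i' /and4P[le2i' _ /eqP]]; lia.
  + by case/existsP=> k /andP[/eqP]; lia.
- by apply/or3P; apply: Or31; apply/existsP; exists j; rewrite /= eqxx.
Qed.

Lemma path_bladeE j i s : j < m -> i + size s < N ->
  path edge (blade j i) s = (s == [seq blade j t | t <- iota i.+1 (size s)]).
Proof.
move=> ltjm; elim: s i => [|b s IHs] i //= lt_isN.
rewrite edge_bladeE 1?ltjm 1?ifT ?eqseq_cons; try lia.
by case: eqP => [->|] //=; rewrite IHs //; lia.
Qed.

Definition blade_tail j := [seq blade j i | i <- iota 1 N.-1].

Lemma size_blade_tail j : size (blade_tail j) = N.-1.
Proof. by rewrite size_map size_iota. Qed.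

Lemma path_blade_tail j : j < m -> path edge (blade j 0) (blade_tail j).
Proof. by move=> ltjm; rewrite path_bladeE ?size_blade_tail //; lia. Qed.

Lemma last_blade_tail j : last (blade j 0) (blade_tail j) = blade j N.-1.
Proof. by rewrite (last_map (fun i => blade j i) _ 0) last_iota. Qed.

Lemma edge_blade_exit j b : j < m -> edge (blade j N.-1) b = (b == 1).
Proof. by move=> ltjm; rewrite edge_bladeE ?prednK ?ltnn ?ltjm; lia. Qed.

Lemma path_from_blade_entry j s : j < m -> size s = 2 * N ->
  path edge (blade j 0) s ->
  exists2 j', j' < m & s = blade_tail j ++ 1 :: blade j' 0 :: blade_tail j'.
Proof.
move=> ltjm size_s; rewrite -(cat_take_drop N.-1 s) cat_path => /andP[].
have size_take : size (take N.-1 s) = N.-1 by rewrite size_takel; lia.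
rewrite path_bladeE ?size_take //; last lia.
move=> /eqP ->; rewrite -/(blade_tail j) last_blade_tail.
have : size (drop N.-1 s) = N.+1 by rewrite size_drop; lia.
case: (drop N.-1 s) => [|y [|z s']] //= [size_s']; first lia.
rewrite edge_blade_exit // => /and3P[/eqP -> + path_s'].
rewrite edge_hubE => /existsP[j' /eqP eq_z]; move: path_s'; rewrite {z}eq_z.
rewrite path_bladeE ?ltn_ord //; last lia.
have -> : size s' = N.-1 by lia.
by move=> /eqP ->; exists j'.
Qed.

Definition windmill_walk j := blade j 0 :: blade_tail j ++ 1 :: blade j 0 :: blade_tail j.

Lemma windmill_walk_is_walk j : j < m -> is_walk m N.+1 (windmill_walk j).
Proof.
move=> ltjm; split=> //; split.
- have vertex_blade i : i < N -> dw_vertex m N.+1 (blade j i).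
    have : j.+1 * N <= m * N by rewrite leq_mul2r ltjm orbT.
    by rewrite /dw_vertex subn1 mulSn /=; lia.
  have vertex_tail : all (dw_vertex m N.+1) (blade_tail j).
    by apply/allP=> v /mapP[i]; rewrite mem_iota => lt_iN ->; apply: vertex_blade; lia.
  by rewrite /= all_cat /= vertex_tail vertex_blade //= /dw_vertex; lia.
- rewrite /= cat_path path_blade_tail //= last_blade_tail edge_blade_exit //.
  rewrite edge_hubE path_blade_tail // eqxx andbT /=.
  by apply/existsP; exists (Ordinal ltjm).
Qed.

Lemma windmill_walk_unique j w : j < m -> sorted edge w ->
  walk_length w = 2 * N -> head 0 w = blade j 0 -> last 0 w = blade j N.-1 ->
  w = windmill_walk j.
Proof.
rewrite /walk_length => ltjm; case: w => [|x s] /= path_s size_s; first lia.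
move=> eq_x; subst x.
have [j' ltj'm ->] := @path_from_blade_entry j s ltjm size_s path_s.
rewrite last_cat /= last_blade_tail.
by case/blade_inj=> [||<- _] //; rewrite prednK.
Qed.

End DutchWindmill.

Theorem lemma2p11 (m n : nat) (hm : 1 <= m) (hn : 3 <= n) (k : nat)
  (hk1 : 1 <= k) (hkm : k <= m) :
  exists! w : seq nat,
    [/\ is_walk m n w, walk_length w = 2 * n - 2,
        head 0 w = (k - 1) * (n - 1) + 2 & last 0 w = (k - 1) * (n - 1) + n].
Proof.
case: n hn => // N hn; have N_gt0 : 0 < N by lia.
have -> : N.+1 - 1 = N by lia.
have -> : 2 * N.+1 - 2 = 2 * N by lia.
have -> : (k - 1) * N + N.+1 = (k - 1) * N + N.-1.+2 by rewrite prednK.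
have ltkm : k - 1 < m by lia.
exists (windmill_walk N (k - 1)); split.
- split; [exact: windmill_walk_is_walk | | by [] |].
  + by rewrite /walk_length /= size_cat /= !size_blade_tail; lia.
  + by rewrite /windmill_walk /= last_cat /= last_blade_tail.
- move=> w [[_ [_ sorted_w]] length_w head_w last_w].
  by apply/esym; apply: (@windmill_walk_unique m N).
Qed.
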